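(* Let $n$ and $s$ be positive integers and let $L=\{\ell_1,\ldots,\ell_s\}$ be a set of $s$ non-negative integers. Let $\mathcal{F}=\{F_1,\ldots,F_m\}$ be a family of subsets of $[n]=\{1,\ldots,n\}$ such that $|F_i\cap F_j|\in L$ for all $1\le i,j\le m$ with $i\neq j$, and suppose $\mathcal{F}$ is ordered, i.e. there exists an index $1\le r\le m$ such that $n\in F_i$ for each $1\le i\le r$, $n\notin F_i$ for each $i>r$, and $|F_i|\le |F_j|$ for all $1\le i<j\le m$. Then $$m\le \sum_{i=0}^{s}\binom{n-1}{i}.$$
   Context: $[n]$ denotes $\{1,2,\ldots,n\}$. *)

(* Ground set [n] = {1,...,n} is represented inside 'I_n.+1
   as the ordinals with value in 1..n; the element n is ord_max. *)
From mathcomp Require Import all_boot all_order.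
Set Implicit Arguments. Unset Strict Implicit. Unset Printing Implicit Defensive.

From mathcomp Require Import all_boot all_order all_algebra zify.
Import GRing.Theory Num.Theory.

(* Write U_i = F_i \ {n} and e_i = [n \in F_i], and consider on subsets Y of [n-1]
   the functions  g_i(Y) = prod_{l in L, l < |F_i|} (|U_i :&: Y| + e_i - l).
   Then g_i(U_i) = prod (|F_i| - l) != 0, while for j < i the ordering gives
   e_i e_j = e_i, so g_i(U_j) = prod (|F_i :&: F_j| - l) = 0, because
   |F_i :&: F_j| lies in L and is smaller than |F_i| (as F_i != F_j and
   |F_j| <= |F_i|).  The evaluation matrix is thus triangular with nonzero
   diagonal and the g_i are linearly independent.  Expanding
   |A :&: Y| = sum_{a in A} [a in Y] and using [a in Y][S <= Y] = [a |: S <= Y],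
   each g_i is a combination of the indicators Y |-> [S <= Y] with S <= [n-1],
   |S| <= s; there are sum_{i <= s} C(n-1, i) of them. *)

Set Implicit Arguments.
Unset Strict Implicit.
Unset Printing Implicit Defensive.

Section FinsetCards.
Variable T : finType.

Lemma card_setI_ltl (A B : {set T}) : A != B -> #|B| <= #|A| -> #|A :&: B| < #|A|.
Proof.
move=> neAB leBA; rewrite (ltn_leqif (subset_leqif_cards (subsetIl A B))).
by apply: contra neAB => /eqP/setIidPl sAB; rewrite eqEcard sAB.
Qed.

Lemma card_setI_D1 (x : T) (A B : {set T}) :
  #|A :&: B| = #|(A :\ x) :&: (B :\ x)| + (x \in A) && (x \in B).
Proof. by rewrite (cardsD1 x) setDIl inE addnC. Qed.

End FinsetCards.

Lemma card_positive_ordD1 n : #|[set x : 'I_n.+1 | 0 < x] :\ ord_max| = n.-1.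
Proof.
have card_pos : #|[set x : 'I_n.+1 | 0 < x]| = n.
  rewrite -[RHS]/(n.+1.-1) -[in RHS](card_ord n.+1) -(cardsC1 ord0).
  by apply: eq_card => x; rewrite !inE lt0n.
move: (cardsD1 ord_max [set x : 'I_n.+1 | 0 < x]); rewrite card_pos inE.
by case: n {card_pos} => [|k] /=; lia.
Qed.

Section SpannedBy.
Variables (K : fieldType) (X : Type) (I : finType) (h : I -> X -> K).
Local Open Scope ring_scope.

Definition spanned_by (D : {set I}) (f : X -> K) :=
  exists c : I -> K, forall x, f x = \sum_(i in D) c i * h i x.

Lemma spanned_by_eq (D : {set I}) (f g : X -> K) :
  f =1 g -> spanned_by D f -> spanned_by D g.
Proof. by move=> eq_fg [c Hc]; exists c => x; rewrite -eq_fg. Qed.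

Lemma spanned_by_gen (D : {set I}) i : i \in D -> spanned_by D (h i).
Proof.
move=> Di; exists (fun j => (j == i)%:R) => x.
rewrite (bigD1 i) //= eqxx mul1r big1 ?addr0 // => j /andP[_ /negbTE->].
by rewrite mul0r.
Qed.

Lemma spanned_byZ (D : {set I}) a (f : X -> K) :
  spanned_by D f -> spanned_by D (fun x => a * f x).
Proof.
move=> [c Hc]; exists (fun i => a * c i) => x.
by rewrite Hc mulr_sumr; apply: eq_bigr => i _; rewrite mulrA.
Qed.

Lemma spanned_byD (D : {set I}) (f g : X -> K) :
  spanned_by D f -> spanned_by D g -> spanned_by D (fun x => f x + g x).
Proof.
move=> [c Hc] [d Hd]; exists (fun i => c i + d i) => x.
by rewrite Hc Hd -big_split; apply: eq_bigr => i _; rewrite mulrDl.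
Qed.

Lemma spanned_by_sum (D : {set I}) (J : Type) (r : seq J) (P : pred J)
    (F : J -> X -> K) :
  (forall j, P j -> spanned_by D (F j)) ->
  spanned_by D (fun x => \sum_(j <- r | P j) F j x).
Proof.
move=> F_span; elim: r => [|j r IHr].
  by exists (fun=> 0) => x; rewrite big_nil big1 // => i _; rewrite mul0r.
apply: spanned_by_eq (fun x => esym (big_cons _ _ _ _ _ _)) _.
case: (boolP (P j)) => Pj; last exact: IHr.
exact: spanned_byD (F_span j Pj) IHr.
Qed.

Lemma spanned_byS (D D' : {set I}) (f : X -> K) :
  D \subset D' -> spanned_by D f -> spanned_by D' f.
Proof.
move=> sDD' [c Hc]; exists (fun i => if i \in D then c i else 0) => x.
rewrite Hc [RHS]big_mkcond [LHS]big_mkcond; apply: eq_bigr => i _.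
case: (boolP (i \in D)) => Di; first by rewrite (subsetP sDD' i Di).
by rewrite mul0r if_same.
Qed.

Lemma spanned_triangular_leq_card (D : {set I}) m
    (f : 'I_m -> X -> K) (u : 'I_m -> X) :
  (forall i, spanned_by D (f i)) ->
  (forall i j : 'I_m, (j < i)%N -> f i (u j) = 0) -> (forall i, f i (u i) != 0) ->
  (m <= #|D|)%N.
Proof.
move=> /fin_all_exists[c Hc] f_lower f_diag.
pose M := \matrix_(i, j) f i (u j).
pose C := \matrix_(i < m, k < #|D|) c i (enum_val k).
pose W := \matrix_(k < #|D|, j < m) h (enum_val k) (u j).
have M_CW : M = C *m W.
  apply/matrixP => i j; rewrite !mxE Hc big_enum_val.
  by apply: eq_bigr => k _; rewrite !mxE.
have M_unit : M \in unitmx.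
  rewrite unitmxE unitfE -det_tr det_trig.
    by apply/prodf_neq0 => i _; rewrite !mxE.
  apply/forallP => i; apply/forallP => j; apply/implyP => lt_ij.
  by rewrite !mxE f_lower.
by rewrite -(mxrank_unit M_unit) M_CW (leq_trans (mxrankM_maxr _ _)) ?rank_leq_row.
Qed.

End SpannedBy.

Section SubsetIndicators.
Variables (T : finType) (K : fieldType).

Definition small_subsets (B : {set T}) k : {set {set T}} :=
  [set S : {set T} | (S \subset B) && (#|S| <= k)%N].

Lemma card_small_subsets (B : {set T}) k :
  #|small_subsets B k| = \sum_(0 <= i < k.+1) 'C(#|B|, i).
Proof.
elim: k => [|k IHk].
  by rewrite big_nat1 -cards_draws; apply: eq_card => S; rewrite !inE leqn0.
rewrite (@big_nat_recr _ _ _ k.+1) //= -IHk -cards_draws.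
rewrite -[LHS](cardsID (small_subsets B k)).
by congr (_ + _); apply: eq_card => S; rewrite !inE; case: (S \subset B) => //=; lia.
Qed.

Lemma small_subsetsS (B : {set T}) k k' :
  k <= k' -> small_subsets B k \subset small_subsets B k'.
Proof.
move=> le_kk'; apply/subsetP => S; rewrite !inE => /andP[-> le_Sk].
exact: leq_trans le_Sk le_kk'.
Qed.

Local Open Scope ring_scope.

Definition subset_indicator (S Y : {set T}) : K := (S \subset Y)%:R.

Lemma card_setI_mul_indicator (A S Y : {set T}) :
  #|A :&: Y|%:R * subset_indicator S Y = \sum_(a in A) subset_indicator (a |: S) Y.
Proof.
rewrite /subset_indicator.
under eq_bigr do rewrite subUset sub1set.
case: (S \subset Y); last by rewrite mulr0 big1 // => a _; rewrite andbF.
rewrite mulr1 -sum1_card natr_sum big_mkcond [RHS]big_mkcond /=.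
by apply: eq_bigr => a _; rewrite inE andbT; case: (a \in A); case: (a \in Y).
Qed.

Lemma spanned_prod_card_setI (G A : {set T}) (J : Type) (r : seq J) (c : J -> K) :
  A \subset G ->
  spanned_by subset_indicator (small_subsets G (size r))
    (fun Y => \prod_(j <- r) (#|A :&: Y|%:R + c j)).
Proof.
move=> sAG; elim: r => [|j r [d Hd]].
  have small0 : set0 \in small_subsets G 0 by rewrite !inE sub0set cards0.
  apply: spanned_by_eq (spanned_by_gen _ small0) => Y.
  by rewrite big_nil /subset_indicator sub0set.
pose D := small_subsets G (size r).
have sDD : D \subset small_subsets G (size r).+1 by apply: small_subsetsS.
apply: (spanned_by_eq (f := fun Y => \sum_(S in D) d S *
    (\sum_(a in A) subset_indicator (a |: S) Y + c j * subset_indicator S Y))).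
  move=> Y; rewrite big_cons Hd mulrC mulr_suml; apply: eq_bigr => S _.
  by rewrite -card_setI_mul_indicator -mulrDl mulrA mulrAC.
apply: spanned_by_sum => S DS; apply/spanned_byZ/spanned_byD.
  apply: spanned_by_sum => a Aa; apply: spanned_by_gen.
  move: DS; rewrite !inE subUset sub1set (subsetP sAG a Aa) /= => /andP[-> le_Sr].
  by rewrite cardsU1 addnC -addn1 leq_add ?leq_b1.
by apply/spanned_byZ/spanned_by_gen; apply: (subsetP sDD).
Qed.

End SubsetIndicators.

Arguments subset_indicator {T K} S Y.

Section OrderedIntersectingFamily.
Variables (n s m r : nat) (L : seq nat) (F : nat -> {set 'I_n.+1}).
Hypotheses (sizeL : size L = s)
  (F_sub : forall i, 1 <= i <= m -> F i \subset [set x : 'I_n.+1 | 0 < x])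
  (F_inj : forall i j, 1 <= i <= m -> 1 <= j <= m -> i != j -> F i != F j)
  (F_L : forall i j, 1 <= i <= m -> 1 <= j <= m -> i != j -> #|F i :&: F j| \in L)
  (F_max_in : forall i, 1 <= i <= r -> (ord_max : 'I_n.+1) \in F i)
  (F_max_out : forall i, r < i <= m -> (ord_max : 'I_n.+1) \notin F i)
  (F_sorted : forall i j, 1 <= i -> i < j -> j <= m -> #|F i| <= #|F j|).

Local Notation top := (ord_max : 'I_n.+1).
Let G := [set x : 'I_n.+1 | 0 < x] :\ top.
Let U i := F i :\ top.
Let g i (Y : {set 'I_n.+1}) : rat := (\prod_(l <- [seq l <- L | (l < #|F i|)%N])
  (#|U i :&: Y|%:R + ((top \in F i)%:R - l%:R)))%R.

Lemma top_in_downward i j : 1 <= j <= i -> i <= m -> top \in F i -> top \in F j.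
Proof.
move=> /andP[j_gt0 le_ji] le_im Fi_top.
apply: F_max_in; rewrite j_gt0 (leq_trans le_ji) //.
by rewrite leqNgt; apply: contraL Fi_top => lt_ri; rewrite F_max_out ?lt_ri.
Qed.

Lemma g_spanned i : 1 <= i <= m -> spanned_by subset_indicator (small_subsets G s) (g i).
Proof.
move=> im; apply: spanned_byS (spanned_prod_card_setI _ _ (setSD _ (F_sub im))).
by apply: small_subsetsS; rewrite size_filter -sizeL count_size.
Qed.

Lemma g_lower_eq0 i j : 1 <= j < i -> i <= m -> g i (U j) = 0%R.
Proof.
move=> /andP[j_gt0 lt_ji] le_im.
have jm : 1 <= j <= m by rewrite j_gt0 ltnW // (leq_trans lt_ji).
have im : 1 <= i <= m by rewrite le_im (leq_trans j_gt0 (ltnW lt_ji)).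
have ne_ij : i != j by rewrite gtn_eqF.
have card_FI : #|U i :&: U j| + (top \in F i) = #|F i :&: F j|.
  rewrite [RHS](card_setI_D1 top); congr (_ + _).
  case: (boolP (top \in F i)) => //= Fi_top.
  by rewrite (top_in_downward _ le_im Fi_top) // j_gt0 ltnW.
apply/eqP; rewrite prodf_seq_eq0; apply/hasP; exists #|F i :&: F j|.
  rewrite mem_filter F_L // card_setI_ltl ?F_inj //.
  exact: F_sorted.
by rewrite addrA -natrD card_FI subrr.
Qed.

Lemma g_diag_neq0 i : g i (U i) != 0%R.
Proof.
rewrite prodf_seq_neq0; apply/allP => l; rewrite mem_filter => /andP[lt_l _].
by rewrite addrA -natrD setIid addnC -cardsD1 subr_eq0 eqr_nat gtn_eqF.
Qed.

Lemma ordered_family_card_bound : m <= \sum_(0 <= i < s.+1) 'C(n - 1, i).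
Proof.
rewrite subn1 -(card_positive_ordD1 n) -card_small_subsets.
apply: (spanned_triangular_leq_card (f := fun i : 'I_m => g i.+1)
                                    (u := fun j : 'I_m => U j.+1)).
- by move=> i; apply: g_spanned; rewrite ltn_ord.
- by move=> i j lt_ji; apply: g_lower_eq0; rewrite ?ltnS ?ltn_ord.
- by move=> i; apply: g_diag_neq0.
Qed.

End OrderedIntersectingFamily.

Theorem theorem3 (n s m : nat) (L : seq nat) (F : nat -> {set 'I_n.+1}) :
  0 < n -> 0 < s -> uniq L -> size L = s ->
  (* each F_i is a subset of [n] = {1,...,n} *)
  (forall i, 1 <= i <= m -> F i \subset [set x : 'I_n.+1 | 0 < x]) ->
  (* F is a family (set) of m distinct subsets *)
  (forall i j, 1 <= i <= m -> 1 <= j <= m -> i != j -> F i != F j) ->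
  (* L-intersecting *)
  (forall i j, 1 <= i <= m -> 1 <= j <= m -> i != j -> #|F i :&: F j| \in L) ->
  (* ordered *)
  (exists r, [/\ 1 <= r <= m,
     (forall i, 1 <= i <= r -> (ord_max : 'I_n.+1) \in F i) &
     (forall i, r < i <= m -> (ord_max : 'I_n.+1) \notin F i)]) ->
  (forall i j, 1 <= i -> i < j -> j <= m -> #|F i| <= #|F j|) ->
  m <= \sum_(0 <= i < s.+1) 'C(n - 1, i).
Proof.
move=> _ _ _ sizeL F_sub F_inj F_L [r [_ F_max_in F_max_out]] F_sorted.
exact: (ordered_family_card_bound sizeL F_sub F_inj F_L
                                  F_max_in F_max_out F_sorted).
Qed.
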